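(* Let $\tau$ be a continuous distributive triangle function on $\Delta^+$, $\Sigma$ a $\sigma$-ring of subsets of $\Omega\ne\emptyset$, $\gamma$ a $\tau$-decomposable measure on $\Sigma$ continuous from below, and $f:\Omega\to[0,+\infty]$ a measurable function that is $\gamma$-integrable on every $E\in\Sigma$. Then the set function $\nu^f:\Sigma\to\Delta^+$, $\nu^f_E:=\int_E f\,d\gamma$, is a $\tau$-decomposable measure.
   Context: $\Delta^+$: functions $F:[-\infty,+\infty]\to[0,1]$ non-decreasing, left-continuous on $\mathbb{R}$, $F(x)=0$ for $x\le0$, $F(+\infty)=1$, ordered pointwise; $\varepsilon_a(x)=1$ if $x>a$, else $0$. Triangle function: symmetric, associative $\tau:\Delta^+\times\Delta^+\to\Delta^+$, non-decreasing in each variable, identity $\varepsilon_0$; $G\oplus H=\tau(G,H)$, $\bigoplus_{k=1}^nG_k=\tau(G_1,\bigoplus_{k=2}^nG_k)$. $c\odot G=\varepsilon_0$ if $c=0$, $(c\odot G)(x)=G(x/c)$ if $c>0$; $\tau$ distributive if $c\odot(G\oplus H)=(c\odot G)\oplus(c\odot H)$ for all $c\ge0$. Convergence in $\Delta^+$ is weak convergence (at continuity points in $\mathbb{R}$ of the limit); $\tau$ continuous if continuous for it. $\tau$-decomposable measure on a ring $\Sigma$: $\gamma:\Sigma\to\Delta^+$, $\gamma_\emptyset=\varepsilon_0$, $\gamma_{E\cup F}=\tau(\gamma_E,\gamma_F)$ for disjoint $E,F$; continuous from below: $\gamma_{E_n}\to\gamma_E$ whenever $E_n\subseteq E_{n+1}$,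 $\bigcup E_n=E$ in $\Sigma$. Simple function $\sum_{i=1}^nx_i\chi_{E_i}$ ($x_i\in[0,\infty)$, $E_i\in\Sigma$ pairwise disjoint), $\int_Ef\,d\gamma=\bigoplus_{i}x_i\odot\gamma_{E\cap E_i}$. Measurable: pointwise limit of simple functions. $\mathcal S_{f,E}$: simple $\mathfrak f\le f$ on $E$. $f$ is $\gamma$-integrable on $E$ if some $H\in\Delta^+$ bounds $\int_E\mathfrak f\,d\gamma\ge H$ for all $\mathfrak f\in\mathcal S_{f,E}$; then $\int_Ef\,d\gamma=\inf\{\int_E\mathfrak f\,d\gamma:\mathfrak f\in\mathcal S_{f,E}\}$ in $(\Delta^+,\le)$. *)

From Coquelicot Require Import Coquelicot.
From Stdlib Require Import Reals ClassicalEpsilon ClassicalDescription List.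
Open Scope R_scope.

Definition DF := Rbar -> R.

Definition Delta (F : DF) : Prop :=
  (forall x, 0 <= F x <= 1) /\
  (forall x y, Rbar_le x y -> F x <= F y) /\
  (forall x : R, forall eps, 0 < eps -> exists delta, 0 < delta /\
      forall y : R, x - delta < y < x -> Rabs (F (Finite y) - F (Finite x)) < eps) /\
  (forall x, Rbar_le x (Finite 0) -> F x = 0) /\
  F p_infty = 1.

Definition dle (F G : DF) : Prop := forall x, F x <= G x.

Definition eps0 : DF := fun x => if Rbar_lt_dec (Finite 0) x then 1 else 0.

Definition weak_conv (Fn : nat -> DF) (F : DF) : Prop :=
  forall x : R, continuity_pt (fun r => F (Finite r)) x ->
    Un_cv (fun n => Fn n (Finite x)) (F (Finite x)).

Definition triangle_function (tau : DF -> DF -> DF) : Prop :=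
  (forall F G, Delta F -> Delta G -> Delta (tau F G)) /\
  (forall F G, Delta F -> Delta G -> tau F G = tau G F) /\
  (forall F G H, Delta F -> Delta G -> Delta H ->
      tau F (tau G H) = tau (tau F G) H) /\
  (forall F G H, Delta F -> Delta G -> Delta H -> dle F G ->
      dle (tau F H) (tau G H) /\ dle (tau H F) (tau H G)) /\
  (forall F, Delta F -> tau F eps0 = F).

Definition tau_continuous (tau : DF -> DF -> DF) : Prop :=
  forall (Fn Gn : nat -> DF) (F G : DF),
    (forall n, Delta (Fn n)) -> (forall n, Delta (Gn n)) -> Delta F -> Delta G ->
    weak_conv Fn F -> weak_conv Gn G ->
    weak_conv (fun n => tau (Fn n) (Gn n)) (tau F G).

Definition smul (c : R) (G : DF) : DF := fun x =>
  if Req_dec_T c 0 then eps0 x else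
  match x with
  | Finite r => G (Finite (r / c))
  | _ => G x
  end.

Definition distributive (tau : DF -> DF -> DF) : Prop :=
  forall c G H, 0 <= c -> Delta G -> Delta H ->
    smul c (tau G H) = tau (smul c G) (smul c H).

Definition sigma_ring {Omega : Type} (Sg : (Omega -> Prop) -> Prop) : Prop :=
  Sg (fun _ => False) /\
  (forall A B, Sg A -> Sg B -> Sg (fun w => A w /\ ~ B w)) /\
  (forall A : nat -> Omega -> Prop, (forall n, Sg (A n)) -> Sg (fun w => exists n, A n w)).

Definition decomposable {Omega : Type} (tau : DF -> DF -> DF)
    (Sg : (Omega -> Prop) -> Prop) (g : (Omega -> Prop) -> DF) : Prop :=
  (forall E, Sg E -> Delta (g E)) /\
  g (fun _ => False) = eps0 /\
  (forall E F, Sg E -> Sg F -> (forall w, ~ (E w /\ F w)) ->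
     g (fun w => E w \/ F w) = tau (g E) (g F)).

Definition cont_from_below {Omega : Type} (Sg : (Omega -> Prop) -> Prop)
    (g : (Omega -> Prop) -> DF) : Prop :=
  forall (En : nat -> Omega -> Prop) (E : Omega -> Prop),
    (forall n, Sg (En n)) -> Sg E ->
    (forall n w, En n w -> En (S n) w) ->
    (forall w, E w <-> exists n, En n w) ->
    weak_conv (fun n => g (En n)) (g E).

(* simple functions: lists of (x_i, E_i) with x_i >= 0, E_i in S pairwise disjoint *)
Definition is_simple {Omega : Type} (Sg : (Omega -> Prop) -> Prop)
    (s : list (R * (Omega -> Prop))) : Prop :=
  Forall (fun p => 0 <= fst p /\ Sg (snd p)) s /\
  ForallOrdPairs (fun p q => forall w, ~ (snd p w /\ snd q w)) s.

Definition ind {Omega : Type} (A : Omega -> Prop) (w : Omega) : R :=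
  if excluded_middle_informative (A w) then 1 else 0.

Definition seval {Omega : Type} (s : list (R * (Omega -> Prop))) (w : Omega) : R :=
  fold_right (fun p acc => fst p * ind (snd p) w + acc) 0 s.

(* int_E (sum x_i chi_{E_i}) dg = (+)_i x_i (.) g_{E cap E_i} *)
Definition sint {Omega : Type} (tau : DF -> DF -> DF) (g : (Omega -> Prop) -> DF)
    (E : Omega -> Prop) (s : list (R * (Omega -> Prop))) : DF :=
  fold_right (fun p acc => tau (smul (fst p) (g (fun w => E w /\ snd p w))) acc) eps0 s.

Definition measurable_fun {Omega : Type} (Sg : (Omega -> Prop) -> Prop)
    (f : Omega -> Rbar) : Prop :=
  exists s : nat -> list (R * (Omega -> Prop)),
    (forall n, is_simple Sg (s n)) /\
    forall w, is_lim_seq (fun n => seval (s n) w) (f w).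

Definition SfE {Omega : Type} (Sg : (Omega -> Prop) -> Prop) (f : Omega -> Rbar)
    (E : Omega -> Prop) (s : list (R * (Omega -> Prop))) : Prop :=
  is_simple Sg s /\ forall w, E w -> Rbar_le (Finite (seval s w)) (f w).

Definition integrable {Omega : Type} (tau : DF -> DF -> DF) (Sg : (Omega -> Prop) -> Prop)
    (g : (Omega -> Prop) -> DF) (f : Omega -> Rbar) (E : Omega -> Prop) : Prop :=
  exists H, Delta H /\ forall s, SfE Sg f E s -> dle H (sint tau g E s).

Definition is_glb (A : DF -> Prop) (H : DF) : Prop :=
  Delta H /\ (forall G, A G -> dle H G) /\
  (forall K, Delta K -> (forall G, A G -> dle K G) -> dle K H).

Definition dinf (A : DF -> Prop) : DF := epsilon (inhabits eps0) (is_glb A).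

Definition integral {Omega : Type} (tau : DF -> DF -> DF) (Sg : (Omega -> Prop) -> Prop)
    (g : (Omega -> Prop) -> DF) (f : Omega -> Rbar) (E : Omega -> Prop) : DF :=
  dinf (fun G => exists s, SfE Sg f E s /\ G = sint tau g E s).

(* The integrals over [E] of the simple functions below [f] form a downward directed subset of
   Delta^+ (the pointwise maximum of two such simple functions is again one, and a larger simple
   function has a smaller integral), and [nu_E] is its infimum. By distributivity the simple
   integral is itself decomposable in the set, [int_{E u F} s = int_E s (+) int_F s], which gives
   [nu_E (+) nu_F <= nu_{E u F}]. Conversely, a downward directed subset of Delta^+ contains a
   sequence converging weakly to its infimum; gluing the restrictions to [E] and [F] of the n-th
   terms of such sequences for [nu_E] and [nu_F] yields simple functions on [E u F] with integral
   [a_n (+) b_n], and continuity of [tau] carries [nu_{E u F} <= a_n (+) b_n] to the limit, first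
   at the (dense) continuity points and then everywhere by left-continuity. *)

From Coquelicot Require Import Coquelicot.
From Stdlib Require Import Reals Lra Lia List Classical FunctionalExtensionality
  PropExtensionality ClassicalEpsilon ClassicalDescription ZArith.
Open Scope R_scope.

Ltac pred_ext := apply functional_extensionality; intro; apply propositional_extensionality.

Lemma Delta_range F : Delta F -> forall x, 0 <= F x <= 1.
Proof. intros [H _]; exact H. Qed.

Lemma Delta_monotone F : Delta F -> forall x y, Rbar_le x y -> F x <= F y.
Proof. intros [_ [H _]]; exact H. Qed.

Lemma Delta_left_cont F : Delta F -> forall (x : R) eps, 0 < eps -> exists delta, 0 < delta /\
  forall y : R, x - delta < y < x -> Rabs (F (Finite y) - F (Finite x)) < eps.
Proof. intros [_ [_ [H _]]]; exact H. Qed.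

Lemma Delta_nonpos F : Delta F -> forall x, Rbar_le x (Finite 0) -> F x = 0.
Proof. intros [_ [_ [_ [H _]]]]; exact H. Qed.

Lemma Delta_p_infty F : Delta F -> F p_infty = 1.
Proof. intros [_ [_ [_ [_ H]]]]; exact H. Qed.

Lemma Delta_m_infty F : Delta F -> F m_infty = 0.
Proof. intro HF; apply (Delta_nonpos F HF); exact I. Qed.

Lemma dle_refl F : dle F F.
Proof. intro; lra. Qed.

Lemma dle_trans F G H : dle F G -> dle G H -> dle F H.
Proof. intros FG GH x; specialize (FG x); specialize (GH x); lra. Qed.

Lemma dle_antisym F G : dle F G -> dle G F -> F = G.
Proof.
  intros FG GF; apply functional_extensionality; intro x.
  specialize (FG x); specialize (GF x); lra.
Qed.

Lemma eps0_Delta : Delta eps0.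
Proof.
  unfold eps0; split; [|split; [|split; [|split]]].
  - intro x; destruct Rbar_lt_dec; lra.
  - intros x y Hxy; destruct (Rbar_lt_dec 0 x) as [hx|]; destruct (Rbar_lt_dec 0 y) as [|hy];
      try lra.
    exfalso; apply hy; eapply Rbar_lt_le_trans; eauto.
  - intros x eps Heps; exists (if Rlt_dec 0 x then x else 1).
    destruct (Rlt_dec 0 x) as [hx|hx]; split; try lra; intros y Hy;
      destruct (Rbar_lt_dec 0 y) as [hy|hy]; destruct (Rbar_lt_dec 0 x) as [hx'|hx'];
      simpl in *; try lra; rewrite Rminus_diag, Rabs_R0; lra.
  - intros x Hx; destruct (Rbar_lt_dec 0 x) as [h|]; auto.
    exfalso; eapply Rbar_lt_not_le; eauto.
  - destruct (Rbar_lt_dec 0 p_infty) as [|n]; auto. exfalso; apply n; exact I.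
Qed.

Lemma dle_eps0 F : Delta F -> dle F eps0.
Proof.
  intros HF x; unfold eps0; destruct (Rbar_lt_dec 0 x) as [|hx].
  - apply (Delta_range F HF).
  - rewrite (Delta_nonpos F HF); [lra|]. now apply Rbar_not_lt_le.
Qed.

Lemma smul_Delta c G : 0 <= c -> Delta G -> Delta (smul c G).
Proof.
  intros Hc HG; unfold smul; destruct (Req_dec_T c 0) as [|Hc0]; [apply eps0_Delta|].
  assert (Hinv : 0 < / c) by (apply Rinv_0_lt_compat; lra).
  split; [|split; [|split; [|split]]].
  - intros [x| |]; apply (Delta_range G HG).
  - intros [x| |] [y| |] Hxy; simpl in Hxy; try tauto; apply (Delta_monotone G HG); simpl;
      auto.
    unfold Rdiv; apply Rmult_le_compat_r; lra.
  - intros x eps Heps; destruct (Delta_left_cont G HG (x / c) eps Heps) as [d [Hd Hy]].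
    exists (d * c); split; [nra|]; intros y Hy'; apply Hy.
    unfold Rdiv; split; [|apply Rmult_lt_compat_r; lra].
    replace (x * / c - d) with ((x - d * c) * / c) by (field; lra).
    apply Rmult_lt_compat_r; lra.
  - intros [x| |] Hx; simpl in Hx; try tauto.
    + apply (Delta_nonpos G HG); simpl; unfold Rdiv; nra.
    + apply (Delta_m_infty G HG).
  - apply (Delta_p_infty G HG).
Qed.

Lemma smul_eps0 c : 0 <= c -> smul c eps0 = eps0.
Proof.
  intro Hc; unfold smul; destruct (Req_dec_T c 0); auto.
  assert (Hinv : 0 < / c) by (apply Rinv_0_lt_compat; lra).
  apply functional_extensionality; intros [x| |]; auto; unfold eps0.
  destruct (Rbar_lt_dec 0 (x / c)) as [h|h]; destruct (Rbar_lt_dec 0 x) as [k|k]; auto;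
    simpl in *; exfalso; unfold Rdiv in *.
  - apply k; replace x with (x * / c * c) by (field; lra); nra.
  - apply h; nra.
Qed.

Lemma smul_antitone x y G : 0 <= x <= y -> Delta G -> dle (smul y G) (smul x G).
Proof.
  intros Hxy HG; unfold smul; destruct (Req_dec_T x 0) as [Hx0|Hx0].
  - apply dle_eps0; fold (smul y G); apply smul_Delta; [lra|auto].
  - destruct (Req_dec_T y 0) as [|Hy0]; [lra|].
    assert (Hinv : 0 < / y) by (apply Rinv_0_lt_compat; lra).
    intros [z| |]; try lra; unfold Rdiv.
    destruct (Rle_dec z 0).
    + rewrite (Delta_nonpos G HG (Finite (z * / y))); [apply (Delta_range G HG)|simpl; nra].
    + apply (Delta_monotone G HG); simpl; apply Rmult_le_compat_l; [lra|].
      apply Rinv_le_contravar; lra.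
Qed.

Section TriangleFunction.
Variable tau : DF -> DF -> DF.
Hypothesis tau_tri : triangle_function tau.

Lemma tau_Delta F G : Delta F -> Delta G -> Delta (tau F G).
Proof. apply tau_tri. Qed.

Lemma tau_comm F G : Delta F -> Delta G -> tau F G = tau G F.
Proof. apply tau_tri. Qed.

Lemma tau_assoc F G H : Delta F -> Delta G -> Delta H -> tau F (tau G H) = tau (tau F G) H.
Proof. apply tau_tri. Qed.

Lemma tau_monotone_l F G H : Delta F -> Delta G -> Delta H -> dle F G ->
  dle (tau F H) (tau G H).
Proof. intros; apply tau_tri; auto. Qed.

Lemma tau_monotone_r F G H : Delta F -> Delta G -> Delta H -> dle F G ->
  dle (tau H F) (tau H G).
Proof. intros; apply tau_tri; auto. Qed.

Lemma tau_eps0_r F : Delta F -> tau F eps0 = F.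
Proof. apply tau_tri. Qed.

Lemma tau_eps0_l F : Delta F -> tau eps0 F = F.
Proof. intro; rewrite tau_comm; auto using eps0_Delta, tau_eps0_r. Qed.

Lemma tau_monotone F F' G G' : Delta F -> Delta F' -> Delta G -> Delta G' ->
  dle F F' -> dle G G' -> dle (tau F G) (tau F' G').
Proof.
  intros; apply dle_trans with (tau F' G); [apply tau_monotone_l|apply tau_monotone_r]; auto.
Qed.

Lemma tau_le_l F G : Delta F -> Delta G -> dle (tau F G) F.
Proof.
  intros; rewrite <- (tau_eps0_r F) at 2; auto.
  apply tau_monotone_r; auto using eps0_Delta, dle_eps0.
Qed.

Lemma tau_medial F G H K : Delta F -> Delta G -> Delta H -> Delta K ->
  tau (tau F G) (tau H K) = tau (tau F H) (tau G K).
Proof.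
  intros. rewrite <- !tau_assoc by auto using tau_Delta. f_equal.
  rewrite !tau_assoc by auto using tau_Delta. f_equal. apply tau_comm; auto.
Qed.
End TriangleFunction.

Section SigmaRing.
Variable Omega : Type.
Variable Sg : (Omega -> Prop) -> Prop.
Hypothesis Sg_ring : sigma_ring Sg.

Lemma sigma_ring_empty : Sg (fun _ => False).
Proof. apply Sg_ring. Qed.

Lemma sigma_ring_diff A B : Sg A -> Sg B -> Sg (fun w => A w /\ ~ B w).
Proof. apply Sg_ring. Qed.

Lemma sigma_ring_inter A B : Sg A -> Sg B -> Sg (fun w => A w /\ B w).
Proof.
  intros HA HB; replace (fun w => A w /\ B w) with (fun w => A w /\ ~ (A w /\ ~ B w)).
  - auto using sigma_ring_diff.
  - pred_ext; split; intros [a b]; split; auto; try tauto; apply NNPP; tauto.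
Qed.

Lemma sigma_ring_union A B : Sg A -> Sg B -> Sg (fun w => A w \/ B w).
Proof.
  intros HA HB.
  replace (fun w => A w \/ B w) with (fun w => exists n : nat, (if n then A else B) w).
  - apply Sg_ring; intros [|n]; auto.
  - pred_ext; split.
    + intros [[|n] h]; auto.
    + intros [h|h]; [exists O|exists 1%nat]; auto.
Qed.
End SigmaRing.

Ltac sigma_ring_closed := simpl;
  repeat match goal with
  | HS : sigma_ring ?S |- ?S (fun _ => False) => apply (sigma_ring_empty _ S HS)
  | HS : sigma_ring ?S |- ?S (fun w => @?A w /\ ~ @?B w) => apply (sigma_ring_diff _ S HS A B)
  | HS : sigma_ring ?S |- ?S (fun w => @?A w /\ @?B w) => apply (sigma_ring_inter _ S HS A B)
  | HS : sigma_ring ?S |- ?S (fun w => @?A w \/ @?B w) => apply (sigma_ring_union _ S HS A B)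
  end; try assumption.

Section SimpleLists.
Variable Omega : Type.
Implicit Types (s t : list (R * (Omega -> Prop))) (p q : R * (Omega -> Prop))
  (E Q : Omega -> Prop).

Definition admissible (Sg : (Omega -> Prop) -> Prop) s :=
  Forall (fun p => 0 <= fst p /\ Sg (snd p)) s.

Definition disjoint_family s := ForallOrdPairs (fun p q => forall w, ~ (snd p w /\ snd q w)) s.

Definition support s (w : Omega) := exists p, In p s /\ snd p w.

Definition restrict Q s := map (fun p => (fst p, fun w => snd p w /\ Q w)) s.

Definition recoef (h : R * (Omega -> Prop) -> R) s := map (fun p => (h p, snd p)) s.

Definition bounded_by (f : Omega -> Rbar) E s :=
  forall w p, E w -> In p s -> snd p w -> Rbar_le (Finite (fst p)) (f w).

Lemma admissible_cons Sg p s :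
  admissible Sg (p :: s) <-> (0 <= fst p /\ Sg (snd p)) /\ admissible Sg s.
Proof. split; intro H; [inversion H; auto|constructor; tauto]. Qed.

Lemma admissible_In Sg s p : admissible Sg s -> In p s -> 0 <= fst p /\ Sg (snd p).
Proof. unfold admissible; rewrite Forall_forall; auto. Qed.

Lemma admissible_app Sg s t : admissible Sg s -> admissible Sg t -> admissible Sg (s ++ t).
Proof. intros; apply Forall_app; auto. Qed.

Lemma admissible_map Sg Sg' (h : R * (Omega -> Prop) -> R * (Omega -> Prop)) s :
  (forall p, 0 <= fst p /\ Sg (snd p) -> 0 <= fst (h p) /\ Sg' (snd (h p))) ->
  admissible Sg s -> admissible Sg' (map h s).
Proof. intros Hh Hs; apply Forall_map; eapply Forall_impl; [exact Hh|exact Hs]. Qed.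

Lemma admissible_restrict Sg Q s : sigma_ring Sg -> Sg Q -> admissible Sg s ->
  admissible Sg (restrict Q s).
Proof.
  intros; apply (admissible_map Sg); [|assumption]; simpl; intros p [? ?]; split;
    sigma_ring_closed.
Qed.

Lemma admissible_restrict_compl Sg Q s : sigma_ring Sg -> Sg Q -> admissible Sg s ->
  admissible Sg (restrict (fun w => ~ Q w) s).
Proof.
  intros; apply (admissible_map Sg); [|assumption]; simpl; intros p [? ?]; split;
    sigma_ring_closed.
Qed.

Lemma admissible_recoef Sg (h : R * (Omega -> Prop) -> R) s :
  (forall p, In p s -> 0 <= h p) -> admissible Sg s -> admissible Sg (recoef h s).
Proof.
  intros Hh Hs; apply Forall_map; unfold admissible in Hs; rewrite Forall_forall in *.
  intros p Hp; simpl; split; [apply Hh|apply Hs]; auto.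
Qed.

Lemma disjoint_family_cons p s : disjoint_family (p :: s) <->
  disjoint_family s /\ forall q, In q s -> forall w, ~ (snd p w /\ snd q w).
Proof.
  unfold disjoint_family; split.
  - intro H; inversion H; subst; rewrite Forall_forall in *; auto.
  - intros [? H]; constructor; auto; rewrite Forall_forall; auto.
Qed.

Lemma disjoint_family_app s t : disjoint_family s -> disjoint_family t ->
  (forall p q w, In p s -> In q t -> ~ (snd p w /\ snd q w)) -> disjoint_family (s ++ t).
Proof.
  induction s as [|p s IH]; simpl; intros Hs Ht Hst; auto.
  apply disjoint_family_cons in Hs as [Hs Hp]; apply disjoint_family_cons; split.
  - apply IH; auto.
  - intros q Hq w; apply in_app_or in Hq as [Hq|Hq]; [apply Hp|apply Hst]; auto.
Qed.

Lemma disjoint_family_map (h : R * (Omega -> Prop) -> R * (Omega -> Prop)) s :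
  (forall p w, snd (h p) w -> snd p w) -> disjoint_family s -> disjoint_family (map h s).
Proof.
  intros Hh; induction s as [|p s IH]; simpl; intros Hs; [constructor|].
  apply disjoint_family_cons in Hs as [Hs Hp]; apply disjoint_family_cons; split; auto.
  intros q Hq w [h1 h2]; apply in_map_iff in Hq as [q' [<- Hq']].
  apply (Hp q' Hq' w); auto.
Qed.

Lemma disjoint_family_restrict Q s : disjoint_family s -> disjoint_family (restrict Q s).
Proof. apply disjoint_family_map; simpl; tauto. Qed.

Lemma disjoint_family_recoef h s : disjoint_family s -> disjoint_family (recoef h s).
Proof. apply disjoint_family_map; auto. Qed.

Lemma In_restrict Q s p : In p (restrict Q s) ->
  exists p', In p' s /\ fst p = fst p' /\ forall w, snd p w <-> snd p' w /\ Q w.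
Proof. intro Hp; apply in_map_iff in Hp as [p' [<- Hp']]; exists p'; simpl; tauto. Qed.

Lemma support_nil : support nil = fun _ => False.
Proof. pred_ext; unfold support; split; [intros [p [[] _]]|tauto]. Qed.

Lemma support_cons p s : support (p :: s) = fun w => snd p w \/ support s w.
Proof.
  pred_ext; unfold support; simpl; split.
  - intros [q [[<-|Hq] h]]; [auto|right; eauto].
  - intros [h|[q [Hq h]]]; eauto.
Qed.

Lemma support_restrict Q s : support (restrict Q s) = fun w => support s w /\ Q w.
Proof.
  pred_ext; unfold support; split.
  - intros [p [Hp h]]; destruct (In_restrict Q s p Hp) as [p' [Hp' [_ e]]].
    apply e in h; split; [exists p'|]; tauto.
  - intros [[p [Hp h]] hq]; exists (fst p, fun w => snd p w /\ Q w).
    split; [apply in_map_iff; eauto|simpl; auto].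
Qed.

Lemma sigma_ring_support Sg s : sigma_ring Sg -> admissible Sg s -> Sg (support s).
Proof.
  intro HS; induction s as [|p s IH]; intro Hs; [rewrite support_nil; sigma_ring_closed|].
  rewrite support_cons; apply admissible_cons in Hs; apply sigma_ring_union; tauto.
Qed.

Lemma seval_out s w : ~ support s w -> seval s w = 0.
Proof.
  induction s as [|p s IH]; simpl; intro Hw; auto.
  rewrite support_cons in Hw; rewrite IH by tauto; unfold ind.
  destruct excluded_middle_informative as [h|h]; [tauto|lra].
Qed.

Lemma seval_In s p w : disjoint_family s -> In p s -> snd p w -> seval s w = fst p.
Proof.
  induction s as [|p0 s IH]; simpl; intros Hs Hp Hw; [destruct Hp|].
  apply disjoint_family_cons in Hs as [Hs Hp0]; unfold ind.
  destruct Hp as [<-|Hp].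
  - rewrite seval_out by (intros [q [Hq h]]; apply (Hp0 q Hq w); auto).
    destruct excluded_middle_informative as [h|h]; [lra|tauto].
  - rewrite IH by auto; destruct excluded_middle_informative as [h|]; [|lra].
    exfalso; apply (Hp0 p Hp w); auto.
Qed.

Lemma SfE_bounded Sg f E s : SfE Sg f E s -> bounded_by f E s.
Proof. intros [[_ Hs] Hf] w p Hw Hp Hpw; rewrite <- (seval_In s p w); auto. Qed.

Lemma SfE_of_bounded Sg f E s : (forall w, Rbar_le (Finite 0) (f w)) ->
  is_simple Sg s -> bounded_by f E s -> SfE Sg f E s.
Proof.
  intros Hf0 Hs Hb; split; auto; intros w Hw.
  destruct (classic (support s w)) as [[p [Hp Hpw]]|Hout].
  - rewrite (seval_In s p w); auto; apply Hs.
  - rewrite seval_out; auto.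
Qed.

Lemma In_recoef h s p : In p (recoef h s) -> exists p', In p' s /\ snd p = snd p'.
Proof. intro Hp; apply in_map_iff in Hp as [p' [<- Hp']]; eauto. Qed.

(* A disjoint family representing the pointwise maximum of [s] and [fst q * ind (snd q)]. *)
Definition join_term q s :=
  restrict (fun w => ~ snd q w) s ++
  recoef (fun p => Rmax (fst p) (fst q)) (restrict (snd q) s) ++
  (fst q, fun w => snd q w /\ ~ support s w) :: nil.

Definition simple_join s t := fold_right join_term s t.

Lemma join_term_simple Sg q s : sigma_ring Sg -> 0 <= fst q -> Sg (snd q) ->
  is_simple Sg s -> is_simple Sg (join_term q s).
Proof.
  intros HS Hq HQ [Hs Hd]; split.
  - apply admissible_app; [apply admissible_restrict_compl; auto|].
    apply admissible_app.
    + apply admissible_recoef; [|apply admissible_restrict; auto].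
      intros p Hp; apply Rle_trans with (fst q); auto using Rmax_r.
    + constructor; [simpl; split; auto|constructor].
      apply sigma_ring_diff; auto; apply sigma_ring_support; auto.
  - apply disjoint_family_app; [apply disjoint_family_restrict; auto| |].
    + apply disjoint_family_app;
        [apply disjoint_family_recoef, disjoint_family_restrict; auto|repeat constructor|].
      intros p r w Hp [<-|[]] [Hpw Hrw]; simpl in Hrw.
      apply In_recoef in Hp as [p' [Hp' e]]; rewrite e in Hpw.
      apply In_restrict in Hp' as [p'' [Hp'' [_ e']]]; apply e' in Hpw.
      apply (proj2 Hrw); exists p''; tauto.
    + intros p r w Hp Hr [Hpw Hrw].
      apply In_restrict in Hp as [p' [_ [_ e]]]; apply e in Hpw.
      apply in_app_or in Hr as [Hr|[<-|[]]]; simpl in Hrw; [|tauto].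
      apply In_recoef in Hr as [r' [Hr' e']]; rewrite e' in Hrw.
      apply In_restrict in Hr' as [r'' [_ [_ e'']]]; apply e'' in Hrw; tauto.
Qed.

Lemma simple_join_simple Sg s t : sigma_ring Sg -> is_simple Sg s -> admissible Sg t ->
  is_simple Sg (simple_join s t).
Proof.
  intros HS Hs; induction t as [|q t IH]; simpl; intro Ht; auto.
  apply admissible_cons in Ht as [[Hq HQ] Ht]; apply join_term_simple; auto.
Qed.

Lemma join_term_bounded f E q s : bounded_by f E s ->
  (forall w, E w -> snd q w -> Rbar_le (Finite (fst q)) (f w)) -> bounded_by f E (join_term q s).
Proof.
  intros Hs Hq w p Hw Hp Hpw; apply in_app_or in Hp as [Hp|Hp].
  - apply In_restrict in Hp as [p' [Hp' [-> e]]]; apply e in Hpw; apply (Hs w p'); tauto.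
  - apply in_app_or in Hp as [Hp|[<-|[]]]; [|apply Hq; simpl in *; tauto].
    apply in_map_iff in Hp as [p' [<- Hp']]; simpl in *.
    apply In_restrict in Hp' as [p'' [Hp'' [-> e]]]; apply e in Hpw.
    assert (h1 := Hs w p'' Hw Hp'' (proj1 Hpw)); assert (h2 := Hq w Hw (proj2 Hpw)).
    destruct (f w); simpl in *; auto; apply Rmax_lub; auto.
Qed.

Lemma simple_join_bounded f E s t : bounded_by f E s -> bounded_by f E t ->
  bounded_by f E (simple_join s t).
Proof.
  intros Hs; induction t as [|q t IH]; simpl; intro Ht; auto.
  apply join_term_bounded.
  - apply IH; intros w p Hw Hp; apply Ht; simpl; auto.
  - intros w Hw; apply (Ht w q); simpl; auto.
Qed.
End SimpleLists.

Arguments admissible {Omega}.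
Arguments disjoint_family {Omega}.
Arguments support {Omega}.
Arguments restrict {Omega}.
Arguments recoef {Omega}.
Arguments bounded_by {Omega}.
Arguments join_term {Omega}.
Arguments simple_join {Omega}.

Section SimpleIntegral.
Variable Omega : Type.
Variable tau : DF -> DF -> DF.
Variable Sg : (Omega -> Prop) -> Prop.
Variable g : (Omega -> Prop) -> DF.
Hypothesis tau_tri : triangle_function tau.
Hypothesis tau_distr : distributive tau.
Hypothesis Sg_ring : sigma_ring Sg.
Hypothesis g_dec : decomposable tau Sg g.
Implicit Types (s t : list (R * (Omega -> Prop))) (p q : R * (Omega -> Prop))
  (E F Q : Omega -> Prop).

Lemma g_Delta E : Sg E -> Delta (g E).
Proof. apply g_dec. Qed.

Lemma g_empty : g (fun _ => False) = eps0.
Proof. apply g_dec. Qed.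

Lemma g_union E F : Sg E -> Sg F -> (forall w, ~ (E w /\ F w)) ->
  g (fun w => E w \/ F w) = tau (g E) (g F).
Proof. apply g_dec. Qed.

Lemma smul_g_Delta c E : 0 <= c -> Sg E -> Delta (smul c (g E)).
Proof. auto using smul_Delta, g_Delta. Qed.

Lemma smul_g_split c E Q : 0 <= c -> Sg E -> Sg Q ->
  tau (smul c (g (fun w => E w /\ Q w))) (smul c (g (fun w => E w /\ ~ Q w))) = smul c (g E).
Proof.
  intros Hc HE HQ; rewrite <- tau_distr by (auto; apply g_Delta; sigma_ring_closed).
  rewrite <- g_union by (sigma_ring_closed || (intro; tauto)).
  do 2 f_equal; pred_ext; split; [|tauto]; intro HEw; destruct (classic (Q x)); tauto.
Qed.

Lemma sint_Delta E s : Sg E -> admissible Sg s -> Delta (sint tau g E s).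
Proof.
  intro HE; induction s as [|p s IH]; simpl; intro Hs; [apply eps0_Delta|].
  apply admissible_cons in Hs as [[Hc HP] Hs].
  apply tau_Delta; auto; apply smul_g_Delta; sigma_ring_closed.
Qed.

Local Ltac Delta_side := repeat first
  [ assumption | apply eps0_Delta | apply sint_Delta | apply tau_Delta | apply smul_g_Delta
  | apply g_Delta | apply admissible_app | sigma_ring_closed ].

Lemma sint_app E s t : Sg E -> admissible Sg s -> admissible Sg t ->
  sint tau g E (s ++ t) = tau (sint tau g E s) (sint tau g E t).
Proof.
  intro HE; induction s as [|p s IH]; simpl; intros Hs Ht.
  - rewrite tau_eps0_l; auto using sint_Delta.
  - apply admissible_cons in Hs as [[Hc HP] Hs]; rewrite IH by auto.
    apply tau_assoc; auto using sint_Delta; apply smul_g_Delta; sigma_ring_closed.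
Qed.

Lemma sint_ext E E' s : (forall p, In p s -> forall w, E w /\ snd p w <-> E' w /\ snd p w) ->
  sint tau g E s = sint tau g E' s.
Proof.
  induction s as [|p s IH]; simpl; intro Hs; auto.
  rewrite IH by auto; do 3 f_equal; pred_ext; apply Hs; auto.
Qed.

Lemma sint_restrict E Q s :
  sint tau g E (restrict Q s) = sint tau g (fun w => E w /\ Q w) s.
Proof.
  induction s as [|p s IH]; simpl; auto.
  rewrite IH; do 3 f_equal; pred_ext; simpl; tauto.
Qed.

Lemma sint_empty s : admissible Sg s -> sint tau g (fun _ => False) s = eps0.
Proof.
  induction s as [|p s IH]; simpl; intro Hs; auto.
  apply admissible_cons in Hs as [[Hc _] Hs]; rewrite IH by auto.
  replace (fun w : Omega => False /\ snd p w) with (fun _ : Omega => False) by (pred_ext; tauto).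
  rewrite g_empty, smul_eps0 by auto; apply tau_eps0_r; auto using eps0_Delta.
Qed.

Lemma sint_union E F s : Sg E -> Sg F -> (forall w, ~ (E w /\ F w)) -> admissible Sg s ->
  sint tau g (fun w => E w \/ F w) s = tau (sint tau g E s) (sint tau g F s).
Proof.
  intros HE HF HEF; induction s as [|p s IH]; simpl; intro Hs.
  - rewrite tau_eps0_r; auto using eps0_Delta.
  - apply admissible_cons in Hs as [[Hc HP] Hs]; rewrite IH by auto.
    replace (fun w => (E w \/ F w) /\ snd p w)
      with (fun w => (E w /\ snd p w) \/ (F w /\ snd p w)) by (pred_ext; tauto).
    rewrite g_union by (sigma_ring_closed || (intros w [[? _] [? _]]; apply (HEF w); auto)).
    rewrite tau_distr by (auto; apply g_Delta; sigma_ring_closed).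
    apply tau_medial; auto using sint_Delta; apply smul_g_Delta; sigma_ring_closed.
Qed.

Lemma sint_split E Q s : Sg E -> Sg Q -> admissible Sg s ->
  sint tau g E s =
  tau (sint tau g (fun w => E w /\ Q w) s) (sint tau g (fun w => E w /\ ~ Q w) s).
Proof.
  intros HE HQ Hs; rewrite <- sint_union by (sigma_ring_closed || (intro; tauto)).
  apply sint_ext; intros p _ w; split; [|tauto].
  intros [HEw Hp]; destruct (classic (Q w)); tauto.
Qed.

Lemma recoef_fst s : recoef fst s = s.
Proof. induction s as [|[c P] s IH]; simpl; f_equal; auto. Qed.

Lemma sint_recoef_antitone E (h k : R * (Omega -> Prop) -> R) s : Sg E -> admissible Sg s ->
  (forall p, In p s -> 0 <= k p <= h p) ->
  dle (sint tau g E (recoef h s)) (sint tau g E (recoef k s)).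
Proof.
  intro HE; induction s as [|p s IH]; simpl; intros Hs Hkh; [apply dle_refl|].
  assert (Hp := Hkh p (or_introl eq_refl)).
  apply admissible_cons in Hs as [[Hc HP] Hs].
  assert (Hk : forall q, In q s -> 0 <= k q <= h q) by auto.
  assert (Hh : forall q, In q s -> 0 <= h q) by (intros q Hq; specialize (Hk q Hq); lra).
  apply tau_monotone; auto;
    try (apply sint_Delta; auto; apply admissible_recoef; auto; apply Hk);
    try (apply smul_g_Delta; sigma_ring_closed; lra).
  apply smul_antitone; auto; apply g_Delta; sigma_ring_closed.
Qed.

Lemma sint_const E c s : Sg E -> 0 <= c -> admissible Sg s -> disjoint_family s ->
  sint tau g E (recoef (fun _ => c) s) = smul c (g (fun w => E w /\ support s w)).
Proof.
  intros HE Hc; induction s as [|p s IH]; simpl; intros Hs Hd.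
  - replace (fun w => E w /\ support nil w) with (fun _ : Omega => False)
      by (rewrite support_nil; pred_ext; tauto).
    rewrite g_empty, smul_eps0; auto.
  - apply admissible_cons in Hs as [[_ HP] Hs]; apply disjoint_family_cons in Hd as [Hd Hp].
    assert (Hsupp := sigma_ring_support _ Sg s Sg_ring Hs).
    rewrite IH, <- tau_distr by (auto; apply g_Delta; sigma_ring_closed).
    rewrite <- g_union by (sigma_ring_closed ||
      (intros w [[_ h1] [_ [q [Hq h2]]]]; apply (Hp q Hq w); auto)).
    do 2 f_equal; rewrite support_cons; pred_ext; tauto.
Qed.


Lemma sint_join_term_le_l E q s : Sg E -> 0 <= fst q -> Sg (snd q) -> is_simple Sg s ->
  dle (sint tau g E (join_term q s)) (sint tau g E s).
Proof.
  intros HE Hq HQ [Hs Hd].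
  assert (Hsupp : Sg (support s)) by (apply sigma_ring_support; auto).
  assert (Hin : admissible Sg (restrict (snd q) s)) by (apply admissible_restrict; auto).
  assert (Hmax : admissible Sg (recoef (fun p => Rmax (fst p) (fst q)) (restrict (snd q) s))).
  { apply admissible_recoef; auto; intros; apply Rle_trans with (fst q); auto using Rmax_r. }
  assert (Hlast : admissible Sg ((fst q, fun w => snd q w /\ ~ support s w) :: nil)).
  { constructor; [simpl; split; auto|constructor]; sigma_ring_closed. }
  assert (Hout : admissible Sg (restrict (fun w => ~ snd q w) s))
    by (apply admissible_restrict_compl; auto).
  unfold join_term; rewrite !sint_app by auto using admissible_app.
  rewrite (sint_split E (snd q) s),
    (tau_comm tau tau_tri (sint tau g (fun w => E w /\ snd q w) s)) by Delta_side.
  rewrite sint_restrict; apply tau_monotone_r; Delta_side.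
  apply dle_trans with (sint tau g E (recoef (fun p => Rmax (fst p) (fst q)) (restrict (snd q) s))).
  - apply tau_le_l; Delta_side.
  - rewrite <- sint_restrict.
    rewrite <- (recoef_fst (restrict (snd q) s)) at 2.
    apply sint_recoef_antitone; auto; intros p Hp; split; [|apply Rmax_l].
    apply (admissible_In _ Sg _ p Hin Hp).
Qed.

Lemma sint_join_term_le_r E q s : Sg E -> 0 <= fst q -> Sg (snd q) -> is_simple Sg s ->
  dle (sint tau g E (join_term q s))
      (tau (smul (fst q) (g (fun w => E w /\ snd q w)))
           (sint tau g (fun w => E w /\ ~ snd q w) s)).
Proof.
  intros HE Hq HQ [Hs Hd].
  assert (Hsupp : Sg (support s)) by (apply sigma_ring_support; auto).
  assert (Hin : admissible Sg (restrict (snd q) s)) by (apply admissible_restrict; auto).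
  assert (Hmax : admissible Sg (recoef (fun p => Rmax (fst p) (fst q)) (restrict (snd q) s))).
  { apply admissible_recoef; auto; intros; apply Rle_trans with (fst q); auto using Rmax_r. }
  assert (Hlast : admissible Sg ((fst q, fun w => snd q w /\ ~ support s w) :: nil)).
  { constructor; [simpl; split; auto|constructor]; sigma_ring_closed. }
  assert (Hout : admissible Sg (restrict (fun w => ~ snd q w) s))
    by (apply admissible_restrict_compl; auto).
  unfold join_term; rewrite !sint_app by auto using admissible_app.
  rewrite sint_restrict, (tau_comm tau tau_tri (sint tau g _ s)) by Delta_side.
  apply tau_monotone_l; Delta_side.
  apply dle_trans with
    (tau (sint tau g E (recoef (fun _ => fst q) (restrict (snd q) s)))
         (sint tau g E ((fst q, fun w => snd q w /\ ~ support s w) :: nil))).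
  - apply tau_monotone_l; Delta_side.
    + apply admissible_recoef; auto.
    + apply sint_recoef_antitone; auto; intros; split; auto using Rmax_r.
  - rewrite sint_const, support_restrict by auto using disjoint_family_restrict.
    simpl; rewrite tau_eps0_r by Delta_side.
    rewrite <- (smul_g_split (fst q) (fun w => E w /\ snd q w) (support s)) by sigma_ring_closed.
    replace (fun w => E w /\ (support s w /\ snd q w))
      with (fun w => (E w /\ snd q w) /\ support s w) by (pred_ext; tauto).
    replace (fun w => E w /\ (snd q w /\ ~ support s w))
      with (fun w => (E w /\ snd q w) /\ ~ support s w) by (pred_ext; tauto).
    apply dle_refl.
Qed.

Lemma sint_simple_join_le_l E s t : Sg E -> is_simple Sg s -> admissible Sg t ->
  dle (sint tau g E (simple_join s t)) (sint tau g E s).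
Proof.
  intros HE Hs; induction t as [|q t IH]; simpl; intro Ht; [apply dle_refl|].
  apply admissible_cons in Ht as [[Hq HQ] Ht].
  eapply dle_trans; [apply sint_join_term_le_l|apply IH]; auto using simple_join_simple.
Qed.

Lemma sint_simple_join_le_r s t : is_simple Sg s -> is_simple Sg t -> forall E, Sg E ->
  dle (sint tau g E (simple_join s t)) (sint tau g E t).
Proof.
  intro Hs; induction t as [|q t IH]; simpl; intros Ht E HE.
  - apply dle_eps0, sint_Delta; auto; apply Hs.
  - destruct Ht as [Ht Hd]; apply admissible_cons in Ht as [[Hq HQ] Ht].
    apply disjoint_family_cons in Hd as [Hd Hqt].
    assert (Hst := simple_join_simple _ Sg s t Sg_ring Hs Ht).
    eapply dle_trans; [apply sint_join_term_le_r; auto|].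
    destruct Hst as [Hst _]; apply tau_monotone_r; Delta_side.
    eapply dle_trans; [apply IH; [split; auto|sigma_ring_closed]|].
    rewrite (sint_ext _ E t); [apply dle_refl|].
    intros p Hp w; split; [tauto|]; intros [HEw Hpw]; split; auto; split; auto.
    intro Hqw; apply (Hqt p Hp w); auto.
Qed.
End SimpleIntegral.

Lemma Lub_Rbar_is_lub (E : R -> Prop) z0 M : E z0 -> (forall z, E z -> z <= M) ->
  is_lub E (real (Lub_Rbar E)).
Proof.
  intros Hz0 HM; destruct (Lub_Rbar_correct E) as [ub lub].
  destruct (Lub_Rbar E) as [r| |]; simpl.
  - split; [intros z Hz; apply (ub z Hz)|].
    intros b Hb; apply (lub (Finite b)); intros z Hz; apply Hb; auto.
  - exfalso; apply (lub (Finite M)); intros z Hz; apply HM; auto.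
  - exfalso; apply (ub z0 Hz0).
Qed.

Lemma is_glb_unique A H1 H2 : is_glb A H1 -> is_glb A H2 -> H1 = H2.
Proof. intros [D1 [L1 G1]] [D2 [L2 G2]]; apply dle_antisym; [apply G2|apply G1]; auto. Qed.

Section GreatestLowerBound.
Variable A : DF -> Prop.
Hypothesis A_nonempty : exists G, A G.
Hypothesis A_Delta : forall G, A G -> Delta G.

(* [glb_df x = sup_{y < x} inf_{B in A} B y], the left-continuous regularisation of the
   pointwise infimum of [A]. *)
Definition lower_left (x z : R) := exists y : R, y < x /\ forall B, A B -> z <= B (Finite y).

Definition glb_at (x : R) := real (Lub_Rbar (lower_left x)).

Definition glb_df : DF := fun x =>
  match x with Finite r => glb_at r | p_infty => 1 | m_infty => 0 end.

Lemma lower_left_0 x : lower_left x 0.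
Proof. exists (x - 1); split; [lra|]; intros B HB; apply (Delta_range B (A_Delta B HB)). Qed.

Lemma lower_left_le_1 x z : lower_left x z -> z <= 1.
Proof.
  intros [y [_ Hz]]; destruct A_nonempty as [G HG].
  specialize (Hz G HG); pose proof (Delta_range G (A_Delta G HG) y); lra.
Qed.

Lemma glb_at_is_lub x : is_lub (lower_left x) (glb_at x).
Proof. apply (Lub_Rbar_is_lub _ 0 1); [apply lower_left_0|apply lower_left_le_1]. Qed.

Lemma le_glb_at x z : lower_left x z -> z <= glb_at x.
Proof. apply glb_at_is_lub. Qed.

Lemma glb_at_le x b : (forall z, lower_left x z -> z <= b) -> glb_at x <= b.
Proof. apply glb_at_is_lub. Qed.

Lemma glb_at_monotone x x' : x <= x' -> glb_at x <= glb_at x'.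
Proof.
  intro Hx; apply glb_at_le; intros z [y [Hy Hz]]; apply le_glb_at; exists y; split; auto; lra.
Qed.

Lemma glb_df_Delta : Delta glb_df.
Proof.
  split; [|split; [|split; [|split]]].
  - intros [x| |]; simpl; try lra.
    split; [apply le_glb_at, lower_left_0|apply glb_at_le, lower_left_le_1].
  - intros [x| |] [y| |]; simpl; intro Hxy; try tauto; try lra.
    + apply glb_at_monotone; auto.
    + apply glb_at_le, lower_left_le_1.
    + apply le_glb_at, lower_left_0.
  - intros x eps Heps; simpl.
    assert (Hclose : exists z, lower_left x z /\ glb_at x - eps / 2 < z).
    { apply NNPP; intro Hn; assert (glb_at x <= glb_at x - eps / 2); [|lra].
      apply glb_at_le; intros z Hz; apply Rnot_lt_le; intro; apply Hn; eauto. }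
    destruct Hclose as [z [[y0 [Hy0 Hz]] Hlt]].
    exists (x - y0); split; [lra|]; intros y Hy.
    assert (z <= glb_at y) by (apply le_glb_at; exists y0; split; auto; lra).
    assert (glb_at y <= glb_at x) by (apply glb_at_monotone; lra).
    rewrite Rabs_left1; lra.
  - intros [x| |] Hx; simpl in *; try tauto; auto.
    apply Rle_antisym; [|apply le_glb_at, lower_left_0].
    apply glb_at_le; intros z [y [Hy Hz]]; destruct A_nonempty as [G HG].
    rewrite <- (Delta_nonpos G (A_Delta G HG) (Finite y)); auto; simpl; lra.
  - reflexivity.
Qed.

Lemma glb_df_is_glb : is_glb A glb_df.
Proof.
  split; [apply glb_df_Delta|split].
  - intros G HG [x| |]; simpl.
    + apply glb_at_le; intros z [y [Hy Hz]]; apply Rle_trans with (G (Finite y)); auto.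
      apply (Delta_monotone G (A_Delta G HG)); simpl; lra.
    + rewrite (Delta_p_infty G (A_Delta G HG)); lra.
    + apply (Delta_range G (A_Delta G HG)).
  - intros K HK HKA [x| |]; simpl.
    + apply Rle_plus_epsilon; intros eps Heps.
      destruct (Delta_left_cont K HK x eps Heps) as [d [Hd Hy]].
      assert (Hclose := Hy (x - d / 2) ltac:(lra)); apply Rabs_def2 in Hclose.
      assert (K (Finite (x - d / 2)) <= glb_at x).
      { apply le_glb_at; exists (x - d / 2); split; [lra|]; intros B HB; apply HKA; auto. }
      lra.
    + apply (Delta_range K HK).
    + rewrite (Delta_m_infty K HK); lra.
Qed.

Lemma dinf_is_glb : is_glb A (dinf A).
Proof. unfold dinf; apply epsilon_spec; exists glb_df; apply glb_df_is_glb. Qed.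

Lemma is_glb_ge_lower H x y z : is_glb A H ->
  y < x -> (forall B, A B -> z <= B (Finite y)) -> z <= H (Finite x).
Proof.
  intros HH Hy Hz; rewrite (is_glb_unique A H glb_df HH glb_df_is_glb).
  apply le_glb_at; exists y; auto.
Qed.
End GreatestLowerBound.

Section DirectedGlbApprox.
Variable A : DF -> Prop.
Hypothesis A_nonempty : exists G, A G.
Hypothesis A_Delta : forall G, A G -> Delta G.
Hypothesis A_directed : forall G1 G2, A G1 -> A G2 ->
  exists G3, A G3 /\ dle G3 G1 /\ dle G3 G2.

Lemma near_min_at (q t : R) : 0 < t ->
  exists G, A G /\ forall B, A B -> G (Finite q) <= B (Finite q) + t.
Proof.
  intros Ht; apply NNPP; intro Hn.
  assert (Hdrop : forall G, A G -> exists B, A B /\ B (Finite q) + t < G (Finite q)).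
  { intros G HG; apply NNPP; intro Hm; apply Hn; exists G; split; auto.
    intros B HB; apply Rnot_lt_le; intro; apply Hm; eauto. }
  assert (Hdrop_k : forall k : nat, exists G, A G /\ G (Finite q) <= 1 - INR k * t).
  { induction k as [|k [G [HG Hk]]].
    - destruct A_nonempty as [G HG]; exists G; split; auto; simpl.
      pose proof (Delta_range G (A_Delta G HG) q); lra.
    - destruct (Hdrop G HG) as [B [HB Hb]]; exists B; split; auto; rewrite S_INR; lra. }
  destruct (INR_archimed t 1 Ht) as [k Hk]; destruct (Hdrop_k k) as [G [HG Hg]].
  pose proof (Delta_range G (A_Delta G HG) q); lra.
Qed.

Definition uniformly_near_min (l : list R) (t : R) (G : DF) :=
  forall q, In q l -> forall B, A B -> G (Finite q) <= B (Finite q) + t.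

Lemma near_min_below (l : list R) t G0 : 0 < t -> A G0 ->
  exists G, A G /\ dle G G0 /\ uniformly_near_min l t G.
Proof.
  intros Ht HG0; induction l as [|q l [G1 [HG1 [HG1le HG1near]]]].
  - exists G0; split; auto; split; [apply dle_refl|]; intros q [].
  - destruct (near_min_at q t Ht) as [Gq [HGq HGqnear]].
    destruct (A_directed G1 Gq HG1 HGq) as [G [HG [HG1' HGq']]].
    exists G; split; [exact HG|split; [exact (dle_trans _ _ _ HG1' HG1le)|]].
    intros q' [<-|Hq'] B HB.
    + specialize (HGq' (Finite q)); specialize (HGqnear B HB); lra.
    + specialize (HG1' (Finite q')); specialize (HG1near q' Hq' B HB); lra.
Qed.

(* mesh [1/(n+1)] on [[0, n+1]] *)
Definition grid (n : nat) : list R :=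
  map (fun i => INR i / INR (S n)) (seq 0 (S n * S n + 1)).

Lemma grid_point_above x N : 0 < x -> x <= INR N ->
  exists q, In q (grid N) /\ x < q <= x + / INR (S N).
Proof.
  intros Hx HN; set (k := INR (S N)).
  assert (Hk : k = INR N + 1) by (unfold k; rewrite S_INR; lra).
  destruct (archimed (x * k)) as [Hup1 Hup2].
  assert (Hup : (0 < up (x * k))%Z) by (apply lt_IZR; simpl; nra).
  exists (IZR (up (x * k)) / k); split; [|unfold Rdiv; split].
  - apply in_map_iff; exists (Z.to_nat (up (x * k))).
    rewrite INR_IZR_INZ, Z2Nat.id by lia; split; [reflexivity|].
    apply in_seq; split; [lia|]; rewrite Nat.add_0_l.
    apply INR_lt; rewrite INR_IZR_INZ, Z2Nat.id, plus_INR, mult_INR by lia.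
    fold k; simpl INR; nra.
  - apply Rmult_lt_reg_r with k; [lra|]; rewrite Rmult_assoc, Rinv_l; lra.
  - apply Rmult_le_reg_r with k; [lra|].
    rewrite Rmult_assoc, Rmult_plus_distr_r, !Rinv_l; lra.
Qed.

Definition refine_step (n : nat) (G0 : DF) : DF :=
  epsilon (inhabits eps0)
    (fun G => A G /\ dle G G0 /\ uniformly_near_min (grid n) (/ INR (S n)) G).

Fixpoint glb_seq (n : nat) : DF :=
  match n with
  | O => refine_step O (epsilon (inhabits eps0) A)
  | S m => refine_step (S m) (glb_seq m)
  end.

Lemma refine_step_spec n G0 : A G0 ->
  A (refine_step n G0) /\ dle (refine_step n G0) G0 /\
  uniformly_near_min (grid n) (/ INR (S n)) (refine_step n G0).
Proof.
  intro HG0; unfold refine_step; apply epsilon_spec, near_min_below; auto.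
  apply Rinv_0_lt_compat, lt_0_INR; lia.
Qed.

Lemma glb_seq_spec n : A (glb_seq n) /\ uniformly_near_min (grid n) (/ INR (S n)) (glb_seq n).
Proof.
  induction n as [|n [IH _]]; simpl.
  - destruct (refine_step_spec 0 _ (epsilon_spec (inhabits eps0) A A_nonempty)) as [? [_ ?]]; auto.
  - destruct (refine_step_spec (S n) _ IH) as [? [_ ?]]; auto.
Qed.

Lemma glb_seq_antitone n m : (n <= m)%nat -> dle (glb_seq m) (glb_seq n).
Proof.
  induction 1 as [|m _ IH]; [apply dle_refl|]; eapply dle_trans; [|exact IH].
  apply refine_step_spec, glb_seq_spec.
Qed.

Lemma glb_seq_weak_conv H : is_glb A H -> weak_conv glb_seq H.
Proof.
  intros HH x Hcont eps Heps; pose proof HH as [HD [Hlow _]].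
  assert (Hle : forall n, H (Finite x) <= glb_seq n (Finite x))
    by (intro n; apply Hlow, glb_seq_spec).
  destruct (Rle_dec x 0) as [Hx|Hx].
  { exists O; intros n _; unfold Rdist.
    rewrite (Delta_nonpos H HD), (Delta_nonpos _ (A_Delta _ (proj1 (glb_seq_spec n))))
      by (simpl; auto).
    rewrite Rminus_diag, Rabs_R0; auto. }
  destruct (Hcont (eps / 2)) as [alpha [Halpha Hcont']]; [lra|].
  assert (Hright : Rabs (H (Finite (x + alpha / 2)) - H (Finite x)) < eps / 2).
  { apply (Hcont' (x + alpha / 2)); split; [split; [exact I|lra]|].
    simpl; unfold Rdist; rewrite Rabs_right; lra. }
  apply Rabs_def2 in Hright.
  destruct (INR_archimed 1 (x + 2 / alpha + 2 / eps) Rlt_0_1) as [N HN].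
  rewrite Rmult_1_r in HN.
  assert (2 / alpha > 0) by (apply Rdiv_lt_0_compat; lra).
  assert (2 / eps > 0) by (apply Rdiv_lt_0_compat; lra).
  assert (HNS : INR N < INR (S N)) by (rewrite S_INR; lra).
  assert (Hstep_alpha : / INR (S N) < alpha / 2).
  { replace (alpha / 2) with (/ (2 / alpha)) by (field; lra); apply Rinv_lt_contravar; nra. }
  assert (Hstep_eps : / INR (S N) < eps / 2).
  { replace (eps / 2) with (/ (2 / eps)) by (field; lra); apply Rinv_lt_contravar; nra. }
  destruct (grid_point_above x N) as [q [Hq [Hxq Hqx]]]; [lra|lra|].
  exists N; intros n Hn; unfold Rdist.
  assert (Hmono : glb_seq n (Finite x) <= glb_seq N (Finite q)).
  { apply Rle_trans with (glb_seq N (Finite x)); [apply glb_seq_antitone; auto|].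
    apply (Delta_monotone _ (A_Delta _ (proj1 (glb_seq_spec N)))); simpl; lra. }
  assert (Hnear : glb_seq N (Finite q) - / INR (S N) <= H (Finite (x + alpha / 2))).
  { apply (is_glb_ge_lower A A_nonempty A_Delta H (x + alpha / 2) q); [exact HH|lra|].
    intros B HB; pose proof (proj2 (glb_seq_spec N) q Hq B HB); lra. }
  specialize (Hle n); rewrite Rabs_right by lra; lra.
Qed.

Lemma directed_glb_approx : exists a : nat -> DF,
  (forall n, A (a n)) /\ forall H, is_glb A H -> weak_conv a H.
Proof. exists glb_seq; split; [intro; apply glb_seq_spec|apply glb_seq_weak_conv]. Qed.
End DirectedGlbApprox.

Section MonotoneContinuityPoints.
Variable T : R -> R.
Hypothesis T_monotone : forall x y, x <= y -> T x <= T y.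
Hypothesis T_bounded : forall x, 0 <= T x <= 1.

(* Of the disjoint fifths [(c+l/5, c+2l/5)] and [(c+3l/5, c+4l/5)] of [(c, c+l)], the one over
   which [T] increases less carries at most half of the increase over [(c, c+l)]. *)
Definition halving_step (I : R * R) : R * R :=
  let (c, d) := I in let l := d - c in
  if Rle_dec (T (c + 2 * l / 5) - T (c + l / 5)) (T (c + 4 * l / 5) - T (c + 3 * l / 5))
  then (c + l / 5, c + 2 * l / 5) else (c + 3 * l / 5, c + 4 * l / 5).

Lemma halving_step_spec I : fst I < snd I ->
  fst I < fst (halving_step I) /\ fst (halving_step I) < snd (halving_step I) /\
  snd (halving_step I) < snd I /\
  T (snd (halving_step I)) - T (fst (halving_step I)) <= (T (snd I) - T (fst I)) / 2.
Proof.
  destruct I as [c d]; simpl; intro Hcd; set (l := d - c).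
  pose proof (T_monotone c (c + l / 5) ltac:(unfold l; lra)).
  pose proof (T_monotone (c + 2 * l / 5) (c + 3 * l / 5) ltac:(unfold l; lra)).
  pose proof (T_monotone (c + 4 * l / 5) d ltac:(unfold l; lra)).
  destruct Rle_dec; simpl; unfold l in *; repeat split; lra.
Qed.

Variables a b : R.
Hypothesis Hab : a < b.

Fixpoint nested (n : nat) : R * R :=
  match n with O => (a, b) | S m => halving_step (nested m) end.

Lemma nested_spec n :
  fst (nested n) < snd (nested n) /\ T (snd (nested n)) - T (fst (nested n)) <= (1 / 2) ^ n.
Proof.
  induction n as [|n [IH1 IH2]]; simpl.
  - pose proof (T_bounded a); pose proof (T_bounded b); lra.
  - destruct (halving_step_spec (nested n) IH1) as [? [? [? ?]]]; split; auto; lra.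
Qed.

Lemma nested_strict n : fst (nested n) < fst (nested (S n)) /\ snd (nested (S n)) < snd (nested n).
Proof. simpl; destruct (halving_step_spec (nested n) (proj1 (nested_spec n))); tauto. Qed.

Lemma nested_monotone n m : (n <= m)%nat ->
  fst (nested n) <= fst (nested m) /\ snd (nested m) <= snd (nested n).
Proof. induction 1 as [|m _ IH]; [lra|]; destruct (nested_strict m); lra. Qed.

Lemma nested_left_lt_right n k : fst (nested n) < snd (nested k).
Proof.
  destruct (nested_monotone n (max n k) (Nat.le_max_l _ _)).
  destruct (nested_monotone k (max n k) (Nat.le_max_r _ _)).
  pose proof (proj1 (nested_spec (max n k))); lra.
Qed.

Lemma monotone_continuity_point : exists c, a < c < b /\ continuity_pt T c.
Proof.
  set (L := fun z => exists n, z = fst (nested n)).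
  assert (HL : bound L) by (exists b; intros z [n ->]; left; apply (nested_left_lt_right n O)).
  destruct (completeness L HL (ex_intro _ a (ex_intro _ O eq_refl))) as [x [Hub Hlub]].
  assert (Hx : forall n, fst (nested n) < x < snd (nested n)).
  { intro n; destruct (nested_strict n); split.
    - apply Rlt_le_trans with (fst (nested (S n))); auto; apply Hub; exists (S n); auto.
    - apply Rle_lt_trans with (snd (nested (S n))); auto; apply Hlub.
      intros z [m ->]; left; apply nested_left_lt_right. }
  exists x; split; [apply (Hx O)|].
  unfold continuity_pt, continue_in, limit1_in, limit_in; intros eps Heps.
  destruct (pow_lt_1_zero (1 / 2) ltac:(rewrite Rabs_right; lra) eps Heps) as [N HN].
  specialize (HN N (le_n N)); rewrite Rabs_right in HN by (apply Rle_ge, pow_le; lra).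
  destruct (Hx N) as [HxN1 HxN2]; pose proof (proj2 (nested_spec N)).
  set (c := fst (nested N)) in *; set (d := snd (nested N)) in *.
  exists (Rmin (x - c) (d - x)); split; [apply Rmin_glb_lt; lra|].
  intros y [_ Hy]; simpl in *; unfold Rdist in *.
  pose proof (Rmin_l (x - c) (d - x)); pose proof (Rmin_r (x - c) (d - x)).
  apply Rabs_def2 in Hy.
  pose proof (T_monotone c y ltac:(lra)); pose proof (T_monotone y d ltac:(lra)).
  pose proof (T_monotone c x ltac:(lra)); pose proof (T_monotone x d ltac:(lra)).
  apply Rabs_def1; lra.
Qed.
End MonotoneContinuityPoints.

Lemma dle_of_weak_conv H G (u : nat -> DF) : Delta H -> Delta G ->
  (forall n, dle H (u n)) -> weak_conv u G -> dle H G.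
Proof.
  intros HH HG Hu Hconv [x| |].
  - apply Rle_plus_epsilon; intros eps Heps.
    destruct (Delta_left_cont H HH x eps Heps) as [d [Hd Hy]].
    destruct (monotone_continuity_point (fun r => G (Finite r))) with (a := x - d) (b := x)
      as [c [Hc Hcont]].
    + intros; apply (Delta_monotone G HG); simpl; auto.
    + intros; apply (Delta_range G HG).
    + lra.
    + assert (H (Finite c) <= G (Finite c)).
      { apply Rle_cv_lim with (fun _ => H (Finite c)) (fun n => u n (Finite c)).
        - intro n; apply Hu.
        - intros e He; exists O; intros; unfold Rdist; rewrite Rminus_diag, Rabs_R0; auto.
        - apply Hconv, Hcont. }
      specialize (Hy c Hc); apply Rabs_def2 in Hy.
      pose proof (Delta_monotone G HG (Finite c) (Finite x) ltac:(simpl; lra)); lra.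
  - rewrite (Delta_p_infty H HH), (Delta_p_infty G HG); lra.
  - rewrite (Delta_m_infty H HH), (Delta_m_infty G HG); lra.
Qed.

Section IntegralSetFunction.
Variable Omega : Type.
Variable tau : DF -> DF -> DF.
Variable Sg : (Omega -> Prop) -> Prop.
Variable g : (Omega -> Prop) -> DF.
Variable f : Omega -> Rbar.
Hypothesis tau_tri : triangle_function tau.
Hypothesis tau_distr : distributive tau.
Hypothesis Sg_ring : sigma_ring Sg.
Hypothesis g_dec : decomposable tau Sg g.
Hypothesis f_nonneg : forall w, Rbar_le (Finite 0) (f w).
Implicit Types (s t : list (R * (Omega -> Prop))) (E F : Omega -> Prop).

Definition simple_integrals E (G : DF) := exists s, SfE Sg f E s /\ G = sint tau g E s.

Lemma simple_integrals_eps0 E : simple_integrals E eps0.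
Proof. exists nil; split; [split; [split; constructor|intros w _; apply f_nonneg]|reflexivity]. Qed.

Lemma simple_integrals_Delta E G : Sg E -> simple_integrals E G -> Delta G.
Proof. intros HE [s [[[Hs _] _] ->]]; apply sint_Delta with Sg; auto. Qed.

Lemma simple_integrals_directed E : Sg E -> forall G1 G2,
  simple_integrals E G1 -> simple_integrals E G2 ->
  exists G3, simple_integrals E G3 /\ dle G3 G1 /\ dle G3 G2.
Proof.
  intros HE G1 G2 [s [Hs ->]] [t [Ht ->]].
  pose proof (proj1 Hs) as Hs_simple; pose proof (proj1 Ht) as Ht_simple.
  exists (sint tau g E (simple_join s t)); split; [|split].
  - exists (simple_join s t); split; auto.
    apply (SfE_of_bounded Omega Sg f E); [auto|apply simple_join_simple; auto; apply Ht_simple|].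
    apply simple_join_bounded; apply (SfE_bounded Omega Sg f E); auto.
  - apply sint_simple_join_le_l with Sg; auto; apply Ht_simple.
  - apply sint_simple_join_le_r with Sg; auto.
Qed.

Lemma integral_is_glb E : Sg E -> is_glb (simple_integrals E) (integral tau Sg g f E).
Proof.
  intro HE; apply dinf_is_glb.
  - exists eps0; apply simple_integrals_eps0.
  - intros G; apply simple_integrals_Delta; auto.
Qed.

Lemma integral_Delta E : Sg E -> Delta (integral tau Sg g f E).
Proof. intro HE; apply integral_is_glb; auto. Qed.

Lemma integral_approx E : Sg E -> exists a : nat -> DF,
  (forall n, simple_integrals E (a n)) /\ weak_conv a (integral tau Sg g f E).
Proof.
  intro HE; destruct (directed_glb_approx (simple_integrals E)) as [a [Ha Ha_conv]].
  - exists eps0; apply simple_integrals_eps0.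
  - intro G; apply simple_integrals_Delta; auto.
  - apply simple_integrals_directed; auto.
  - exists a; split; auto; apply Ha_conv, integral_is_glb; auto.
Qed.

Lemma integral_empty : integral tau Sg g f (fun _ => False) = eps0.
Proof.
  apply (is_glb_unique (simple_integrals (fun _ => False)));
    [apply integral_is_glb; sigma_ring_closed|].
  split; [apply eps0_Delta|split].
  - intros G [s [[[Hs _] _] ->]]; rewrite (sint_empty Omega tau Sg g); auto; apply dle_refl.
  - intros K _ HK; apply HK, simple_integrals_eps0.
Qed.

Lemma SfE_antitone E E' s : (forall w, E' w -> E w) -> SfE Sg f E s -> SfE Sg f E' s.
Proof. intros HE' [Hs Hf]; split; auto. Qed.

Lemma integral_union_ge E F : Sg E -> Sg F -> (forall w, ~ (E w /\ F w)) ->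
  dle (tau (integral tau Sg g f E) (integral tau Sg g f F))
      (integral tau Sg g f (fun w => E w \/ F w)).
Proof.
  intros HE HF HEF; apply integral_is_glb; sigma_ring_closed;
    [apply tau_Delta; auto using integral_Delta|].
  intros G [s [Hs ->]]; rewrite (sint_union Omega tau Sg g); auto; [|apply Hs].
  apply tau_monotone; auto using integral_Delta; try (apply sint_Delta with Sg; auto; apply Hs);
    apply integral_is_glb; auto; exists s; split; auto;
    apply SfE_antitone with (fun w => E w \/ F w); auto.
Qed.

Lemma SfE_glue E F s t : Sg E -> Sg F -> (forall w, ~ (E w /\ F w)) ->
  SfE Sg f E s -> SfE Sg f F t -> SfE Sg f (fun w => E w \/ F w) (restrict E s ++ restrict F t).
Proof.
  intros HE HF HEF Hs Ht.
  pose proof (SfE_bounded Omega Sg f E s Hs) as Hs_bd.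
  pose proof (SfE_bounded Omega Sg f F t Ht) as Ht_bd.
  destruct Hs as [[Hs Hds] _], Ht as [[Ht Hdt] _].
  apply SfE_of_bounded; auto; [split|].
  - apply admissible_app; apply admissible_restrict; auto.
  - apply disjoint_family_app; auto using disjoint_family_restrict.
    intros p q w Hp Hq; apply In_restrict in Hp as [? [_ [_ ep]]];
      apply In_restrict in Hq as [? [_ [_ eq]]]; rewrite ep, eq; intros [[_ ?] [_ ?]].
    apply (HEF w); auto.
  - intros w p Hw Hp Hpw; apply in_app_or in Hp as [Hp|Hp];
      apply In_restrict in Hp as [p' [Hp' [-> e]]]; apply e in Hpw.
    + apply (Hs_bd w p'); tauto.
    + apply (Ht_bd w p'); tauto.
Qed.

Lemma sint_glue E F s t : Sg E -> Sg F -> (forall w, ~ (E w /\ F w)) ->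
  admissible Sg s -> admissible Sg t ->
  sint tau g (fun w => E w \/ F w) (restrict E s ++ restrict F t) =
  tau (sint tau g E s) (sint tau g F t).
Proof.
  intros HE HF HEF Hs Ht.
  rewrite (sint_app Omega tau Sg g), !sint_restrict
    by (sigma_ring_closed || auto using admissible_restrict).
  f_equal; apply sint_ext; intros p _ w; specialize (HEF w); tauto.
Qed.

Lemma integral_union_le E F : tau_continuous tau -> Sg E -> Sg F ->
  (forall w, ~ (E w /\ F w)) ->
  dle (integral tau Sg g f (fun w => E w \/ F w))
      (tau (integral tau Sg g f E) (integral tau Sg g f F)).
Proof.
  intros tau_cont HE HF HEF.
  destruct (integral_approx E HE) as [a [Ha Ha_conv]].
  destruct (integral_approx F HF) as [b [Hb Hb_conv]].
  apply dle_of_weak_conv with (u := fun n => tau (a n) (b n)).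
  - apply integral_Delta; sigma_ring_closed.
  - apply tau_Delta; auto using integral_Delta.
  - intro n; destruct (Ha n) as [s [Hs ->]]; destruct (Hb n) as [t [Ht ->]].
    apply integral_is_glb; [sigma_ring_closed|].
    exists (restrict E s ++ restrict F t); split; [apply SfE_glue; auto|].
    symmetry; apply sint_glue; auto; [apply Hs|apply Ht].
  - apply tau_cont; auto using integral_Delta.
    + intro n; apply (simple_integrals_Delta E); auto.
    + intro n; apply (simple_integrals_Delta F); auto.
Qed.
End IntegralSetFunction.

Theorem theorem5p6 (Omega : Type) (tau : DF -> DF -> DF)
    (Sg : (Omega -> Prop) -> Prop) (g : (Omega -> Prop) -> DF) (f : Omega -> Rbar) :
  triangle_function tau -> tau_continuous tau -> distributive tau ->
  inhabited Omega -> sigma_ring Sg ->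
  decomposable tau Sg g -> cont_from_below Sg g ->
  (forall w, Rbar_le (Finite 0) (f w)) -> measurable_fun Sg f ->
  (forall E, Sg E -> integrable tau Sg g f E) ->
  decomposable tau Sg (fun E => integral tau Sg g f E).
Proof.
  intros tau_tri tau_cont tau_distr _ Sg_ring g_dec _ f_nonneg _ _.
  split; [|split].
  - intros E HE; apply integral_Delta; auto.
  - apply (integral_empty Omega tau Sg g f); auto.
  - intros E F HE HF HEF; apply dle_antisym.
    + apply integral_union_le; auto.
    + apply integral_union_ge; auto.
Qed.
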